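(* For all positive integers $N$ and $W$ there exists a real polynomial $F$ of degree $k$, where $k\le\left\lfloor\frac{16}{7}W^{1/4}\sqrt{N}\right\rfloor+4$, such that \[F(0)>W\sum_{i=1}^N|F(i)|.\] *)

From mathcomp Require Import all_boot all_order all_algebra.
From mathcomp Require Import reals.

(* Let T_m be the Chebyshev polynomial and Q_m(x) = (1 - T_m(x)) / (1 - x), a
   polynomial of degree m - 1 with Q_m(1) = T_m'(1) = m^2.  Since |T_m| <= 1 on
   [-1, 1], we get |(1 - x) Q_m(x)| <= 2 there.  The polynomial
   F(y) = Q_m(1 - 2y/N)^2 of degree 2m - 2 thus satisfies F(0) = m^4 and
   |F(i)| <= (N/i)^2 for 1 <= i <= N, so that sum_i |F(i)| <= (5/3) N^2.
   Choosing m = floor(a) + 1 with a = (8/7) W^(1/4) sqrt N gives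
   deg F <= 2a and F(0) > a^4 = (4096/2401) W N^2 > (5/3) W N^2. *)

From mathcomp Require Import all_boot all_order all_algebra.
From mathcomp Require Import reals.
From mathcomp Require Import ring lra.
Import Order.TTheory GRing.Theory Num.Theory.
Local Open Scope ring_scope.

Lemma size_polyD_le {R : nzSemiRingType} {p q : {poly R}} {n : nat} :
  (size p <= n)%N -> (size q <= n)%N -> (size (p + q)%R <= n)%N.
Proof. by move=> hp hq; rewrite (leq_trans (size_polyD p q)) // geq_max hp. Qed.

Lemma size_polyM_le {R : nzSemiRingType} {p q : {poly R}} {m n : nat} :
  (size p <= m)%N -> (size q <= n)%N -> (size (p * q)%R <= (m + n).-1)%N.
Proof.
move=> hp hq; rewrite (leq_trans (size_polyMleq p q)) // -!subn1 leq_sub2r //.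
exact: leq_add.
Qed.

Section Chebyshev.
Variable R : comNzRingType.

(* [chebU m] is the Chebyshev polynomial of the second kind U_(m-1). *)
Fixpoint chebT (m : nat) : {poly R} :=
  if m is m'.+1 then 'X * chebT m' + ('X^2 - 1) * chebU m' else 1
with chebU (m : nat) : {poly R} :=
  if m is m'.+1 then chebT m' + 'X * chebU m' else 0.

Fixpoint chebQ (m : nat) : {poly R} :=
  if m is m'.+1 then chebQ m' + chebT m' + ('X + 1) * chebU m' else 0.

Lemma chebTU_Pell m : chebT m ^+ 2 - ('X^2 - 1) * chebU m ^+ 2 = 1.
Proof. by elim: m => [|m IH] /=; [ring | rewrite -[RHS]IH; ring]. Qed.

Lemma mul_1subX_chebQ m : (1 - 'X) * chebQ m = 1 - chebT m.
Proof. by elim: m => [|m IH] /=; [ring | rewrite !mulrDr IH; ring]. Qed.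

Lemma size_chebTU m : (size (chebT m) <= m.+1)%N /\ (size (chebU m) <= m)%N.
Proof.
elim: m => [|m [hT hU]] /=; first by rewrite size_poly1 size_poly0.
have hX : (size ('X : {poly R}) <= 2)%N by rewrite size_polyX.
have hX21 : (size ('X^2 - 1 : {poly R})%R <= 3)%N by rewrite -polyC1 size_XnsubC.
split; apply: size_polyD_le.
- exact: size_polyM_le hX hT.
- exact: size_polyM_le hX21 hU.
- exact: leq_trans hT _.
- exact: size_polyM_le hX hU.
Qed.

Lemma size_chebQ m : (size (chebQ m) <= m)%N.
Proof.
elim: m => [|m IH] /=; first by rewrite size_poly0.
have [hT hU] := size_chebTU m.
have hX1 : (size ('X + 1 : {poly R})%R <= 2)%N by rewrite -polyC1 size_XaddC.
apply: size_polyD_le; first exact: size_polyD_le (leq_trans IH _) hT.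
exact: size_polyM_le hX1 hU.
Qed.

Lemma chebTUQ_horner1 m :
  [/\ (chebT m).[1] = 1, (chebU m).[1] = m%:R & (chebQ m).[1] = (m ^ 2)%:R].
Proof.
elim: m => [|m [hT hU hQ]] /=; first by rewrite hornerC horner0.
by rewrite !hornerE hT hU hQ !natrX -natr1; split; ring.
Qed.

End Chebyshev.

Lemma chebQ_horner_bound {R : realFieldType} m (x : R) :
  -1 <= x <= 1 -> `|(1 - x) * (chebQ R m).[x]| <= 2.
Proof.
move=> /andP [x_ge x_le].
have := congr1 (horner^~ x) (chebTU_Pell R m).
rewrite !(hornerD, hornerN, hornerM, horner_exp, hornerX, hornerC) => Pell.
have := congr1 (horner^~ x) (mul_1subX_chebQ R m).
rewrite !(hornerD, hornerN, hornerM, hornerX, hornerC) => ->.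
have x_sqr_le1 : x * x <= 1 by nra.
have U_term_ge0 : 0 <= (1 - x * x) * ((chebU R m).[x] * (chebU R m).[x]).
  by rewrite mulr_ge0 ?subr_ge0 // -expr2 sqr_ge0.
have T_sqr_le1 : (chebT R m).[x] * (chebT R m).[x] <= 1 by lra.
by rewrite ler_norml; apply/andP; split; nra.
Qed.

Section InverseSquares.
Variable R : realFieldType.

Lemma sum_inv_sqr_telescope n :
  \sum_(1 <= i < n.+2) (i%:R^-1 : R) ^+ 2 <= 5 / 3 - 2 / (2 * n%:R + 3).
Proof.
elim: n => [|n IH]; first by rewrite big_nat1 invr1 expr1n mulr0 add0r; lra.
rewrite big_nat_recr //= -[n.+2%:R]natr1 -[n.+1%:R]natr1.
have n_ge0 : 0 <= n%:R :> R by [].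
have step : ((n%:R + 1 + 1)^-1) ^+ 2 <= 2 / (2 * n%:R + 3) - 2 / (2 * (n%:R + 1) + 3) :> R.
  rewrite -subr_ge0.
  have -> : 2 / (2 * n%:R + 3) - 2 / (2 * (n%:R + 1) + 3) - ((n%:R + 1 + 1)^-1) ^+ 2
      = ((n%:R + 2) ^+ 2 * (2 * n%:R + 3) * (2 * n%:R + 5))^-1 :> R.
    by field; rewrite !lt0r_neq0 //; lra.
  by rewrite invr_ge0 !mulr_ge0 ?sqr_ge0 //; lra.
lra.
Qed.

Lemma sum_inv_sqr_le n : \sum_(1 <= i < n.+1) (i%:R^-1 : R) ^+ 2 <= 5 / 3.
Proof.
case: n => [|n]; first by rewrite big_geq //; lra.
apply: le_trans (sum_inv_sqr_telescope n) _.
have : 0 <= 2 / (2 * n%:R + 3) :> R by rewrite divr_ge0 // addr_ge0 ?mulr_ge0.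
lra.
Qed.

End InverseSquares.

Section PeakPolynomial.
Variables (R : realFieldType) (N : nat).

Definition peak_poly (m : nat) : {poly R} :=
  (chebQ R m \Po (1 - (2 / N%:R) *: 'X)) ^+ 2.

Lemma size_peak_poly m : (size (peak_poly m.+1) <= (2 * m).+1)%N.
Proof.
have size_lin : (size (1 - (2 / N%:R) *: 'X : {poly R})%R <= 2)%N.
  rewrite size_polyD_le ?size_poly1 // size_polyN.
  by rewrite (leq_trans (size_scale_leq _ _)) ?size_polyX.
have size_comp : (size (chebQ R m.+1 \Po (1 - (2 / N%:R) *: 'X)) <= m.+1)%N.
  apply: leq_trans (size_comp_poly_leq _ _) _.
  rewrite ltnS -[X in (_ <= X)%N]muln1 leq_mul // -subn1 leq_subLR ?size_chebQ //.
rewrite /peak_poly (leq_trans (size_polyM_le size_comp size_comp)) //.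
by rewrite addnn -mul2n mulnS.
Qed.

Lemma peak_poly_horner0 m : (peak_poly m).[0] = m%:R ^+ 4.
Proof.
have [_ _ Q1] := chebTUQ_horner1 R m.
rewrite /peak_poly horner_exp horner_comp !(hornerD, hornerN, hornerZ, hornerX, hornerC).
by rewrite mulr0 subr0 Q1 natrX -exprM.
Qed.

Lemma peak_poly_neq0 m : peak_poly m.+1 != 0.
Proof.
apply/eqP => F_eq0; have := peak_poly_horner0 m.+1.
by rewrite F_eq0 horner0 => /esym/eqP; rewrite expf_eq0 pnatr_eq0.
Qed.

Lemma peak_poly_horner_le m i :
  (0 < i <= N)%N -> `|(peak_poly m).[i%:R]| <= (N%:R / i%:R) ^+ 2.
Proof.
move=> /andP [i_gt0 i_leN].
have N_pos : 0 < N%:R :> R by rewrite ltr0n (leq_trans i_gt0).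
have i_pos : 0 < i%:R :> R by rewrite ltr0n.
have step_pos : 0 < 2 / N%:R * i%:R :> R by rewrite !mulr_gt0 ?invr_gt0.
have step_le2 : 2 / N%:R * i%:R <= 2 :> R.
  by rewrite mulrAC ler_pdivrMr // ler_pM2l // ler_nat.
pose c : R := 1 - 2 / N%:R * i%:R.
have -> : (peak_poly m).[i%:R] = (chebQ R m).[c] ^+ 2.
  by rewrite /peak_poly horner_exp horner_comp !(hornerD, hornerN, hornerZ, hornerX, hornerC).
have c_range : -1 <= c <= 1 by apply/andP; split; rewrite /c; lra.
have := chebQ_horner_bound m c c_range.
have -> : 1 - c = 2 / N%:R * i%:R by rewrite /c; ring.
rewrite normrM gtr0_norm // => Q_le.
have Q_bound : `|(chebQ R m).[c]| <= N%:R / i%:R.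
  rewrite ler_pdivlMr // mulrC -(ler_pM2l (_ : 0 < 2 / N%:R)) ?divr_gt0 //.
  by rewrite mulrA (le_trans Q_le) // divfK ?lt0r_neq0.
rewrite ger0_norm ?sqr_ge0 // -real_normK ?num_real //.
by rewrite lerXn2r ?nnegrE // divr_ge0 // ltW.
Qed.

Lemma peak_poly_sum_le m :
  \sum_(1 <= i < N.+1) `|(peak_poly m).[i%:R]| <= 5 / 3 * N%:R ^+ 2.
Proof.
rewrite (@le_trans _ _ (\sum_(1 <= i < N.+1) N%:R ^+ 2 * (i%:R^-1) ^+ 2)) //.
  apply: ler_sum_nat => i /andP [i_gt0 i_le].
  by rewrite -exprMn peak_poly_horner_le // i_gt0 -ltnS.
by rewrite -mulr_sumr mulrC ler_wpM2r ?sqr_ge0 ?sum_inv_sqr_le.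
Qed.

Lemma peak_poly_dominates (w : R) m :
  0 <= w -> w * (5 / 3 * N%:R ^+ 2) < m%:R ^+ 4 ->
  w * \sum_(1 <= i < N.+1) `|(peak_poly m).[i%:R]| < (peak_poly m).[0].
Proof.
move=> w_ge0; rewrite peak_poly_horner0; apply: le_lt_trans.
by rewrite ler_wpM2l ?peak_poly_sum_le.
Qed.

End PeakPolynomial.

Lemma sqrt_sqrt_expr4 (R : rcfType) (x : R) : 0 <= x -> Num.sqrt (Num.sqrt x) ^+ 4 = x.
Proof. by move=> x_ge0; rewrite (exprM _ 2 2) !sqr_sqrtr ?sqrtr_ge0. Qed.

Theorem lemma4p5 (R : realType) (N W : nat) (hN : (0 < N)%N) (hW : (0 < W)%N) :
  exists (F : {poly R}) (k : nat),
    size F = k.+1 /\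
    (k%:Z <= Num.floor ((16%:R / 7%:R) * Num.sqrt (Num.sqrt (W%:R : R)) * Num.sqrt (N%:R : R)) + 4)%R /\
    F.[0] > W%:R * \sum_(1 <= i < N.+1) `|F.[i%:R]|.
Proof.
pose a : R := 8 / 7 * Num.sqrt (Num.sqrt W%:R) * Num.sqrt N%:R.
have a_ge0 : 0 <= a by rewrite !mulr_ge0 ?invr_ge0 ?sqrtr_ge0.
have /andP [trunc_le a_lt] := truncn_itv a_ge0.
pose F := peak_poly R N (Num.truncn a).+1.
exists F, (size F).-1; split; first by rewrite prednK // size_poly_gt0 peak_poly_neq0.
split.
  have deg_le : ((size F).-1 <= 2 * Num.truncn a)%N.
    by rewrite -ltnS prednK ?size_poly_gt0 ?peak_poly_neq0 ?size_peak_poly.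
  have -> : 16%:R / 7%:R * Num.sqrt (Num.sqrt W%:R) * Num.sqrt N%:R = 2 * a.
    by rewrite /a; ring.
  rewrite -[_%:Z]addr0 lerD // floor_ge_int.
  apply: (@le_trans _ _ (2 * Num.truncn a)%:R); first by rewrite -pmulrn ler_nat.
  by rewrite natrM ler_pM2l.
apply: peak_poly_dominates => //.
have a4 : a ^+ 4 = 4096 / 2401 * (W%:R * N%:R ^+ 2).
  by rewrite !exprMn sqrt_sqrt_expr4 // (exprM (Num.sqrt N%:R) 2 2) sqr_sqrtr //; field.
have : a ^+ 4 < (Num.truncn a).+1%:R ^+ 4 by rewrite ltrXn2r.
have : 0 < W%:R * N%:R ^+ 2 :> R by rewrite mulr_gt0 ?exprn_gt0 ?ltr0n.
rewrite a4; lra.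
Qed.
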